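(* Let $k\ge1$, let $A_k$ be the matrix defined below, and let $\mathbf{b}=(\mathbf{w}_1,\mathbf{w}_2,c)^{\mathsf T}\in\mathbb{Z}^{2k+1}$ with $\mathbf{w}_1,\mathbf{w}_2\in\mathbb{Z}^k$, $c\in\mathbb{Z}$, such that $\mathcal{F}_{A_k}(\mathbf{b})\neq\emptyset$. Consider the fiber graph $G=G_{A_k,\mathbf{b},\mathcal{G}(A_k)}$ and let $s\in[l(\mathbf{b}),u(\mathbf{b})]$ be an integer. Then a vertex $\mathbf{v}\in C_s(\mathbf{b})$ has a neighbor in $C_{s-1}(\mathbf{b})$ if and only if $s>l(\mathbf{b})$, and in this case it has at least $2^k$ neighbors in $C_{s-1}(\mathbf{b})$. Likewise, $\mathbf{v}$ has a neighbor in $C_{s+1}(\mathbf{b})$ if and only if $s<u(\mathbf{b})$, and in this case it has at least $2^k$ neighbors in $C_{s+1}(\mathbf{b})$.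
   Context: $I_k$ is the $k\times k$ identity, $\mathbf{1}_k$ the all-ones vector in $\mathbb{Z}^k$. Define $$A_k=\begin{pmatrix} I_k & I_k & 0 & 0 & -\mathbf{1}_k & \mathbf{0}\\ 0&0&I_k&I_k&\mathbf{0}&-\mathbf{1}_k\\ 0&0&0&0&1&1\end{pmatrix}\in\mathbb{Z}^{(2k+1)\times(4k+2)}$$ (zero blocks of appropriate sizes; last two columns are single columns). Fiber: $\mathcal{F}_A(\mathbf{b})=\{\mathbf{u}\in\mathbb{Z}^n_{\ge0}:A\mathbf{u}=\mathbf{b}\}$. For $\mathcal{M}\subset\mathbb{Z}^n$, $G_{A,\mathbf{b},\mathcal{M}}$ is the graph on $\mathcal{F}_A(\mathbf{b})$ with distinct $\mathbf{u},\mathbf{v}$ adjacent iff $\mathbf{u}-\mathbf{v}\in\pm\mathcal{M}$. The Graver basis $\mathcal{G}(A)$ is the set of $\sqsubseteq$-minimal elements of $(\ker A\cap\mathbb{Z}^n)\setminus\{\mathbf{0}\}$, where $\mathbf{u}\sqsubseteq\mathbf{v}$ iff $u_iv_i\ge0$ and $|u_i|\le|v_i|$ for all $i$. For $\mathbf{w}\in\mathbb{Z}^k$, $\mathbf{w}^-\in\mathbb{Z}^k_{\ge0}$ has entries $\max(-w_i,0)$. For $\mathbf{b}=(\mathbf{w}_1,\mathbf{w}_2,c)$ set $l(\mathbf{b}):=\|\mathbf{w}_1^-\|_\infty$ and $u(\mathbf{b}):=c-\|\mathbf{w}_2^-\|_\infty$. For an integer $s$, $C_s(\mathbf{b}):=\{\mathbf{u}\in\mathcal{F}_{A_k}(\mathbf{b}):u_{4k+1}=s\}$.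 *)

From HB Require Import structures.
From mathcomp Require Import all_boot all_order all_algebra.
Set Implicit Arguments. Unset Strict Implicit. Unset Printing Implicit Defensive.
Import Order.TTheory GRing.Theory Num.Theory.
Local Open Scope ring_scope.

(* Entry of a column vector at a 0-based nat index (0 outside the range). *)
Definition ent (n : nat) (u : 'cV[int]_n) (j : nat) : int :=
  if @insub nat (fun m => (m < n)%N) 'I_n j is Some i then u i 0 else 0.

(* Entry (i,j) (0-based) of the matrix A_k. Columns: 0..k-1, k..2k-1, 2k..3k-1,
   3k..4k-1 are the four I_k blocks, column 4k and 4k+1 the last two columns. *)
Definition Aentry (k i j : nat) : int :=
  if (i < k)%N then
    (if (j == i) || (j == k + i)%N then 1 else if j == (4 * k)%N then -1 else 0)
  else if (i < 2 * k)%N then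
    (if (j == 2 * k + (i - k))%N || (j == 3 * k + (i - k))%N then 1
     else if j == (4 * k + 1)%N then -1 else 0)
  else
    (if (j == 4 * k)%N || (j == 4 * k + 1)%N then 1 else 0).

Definition A_k (k : nat) : 'M[int]_(2 * k + 1, 4 * k + 2) :=
  \matrix_(i, j) Aentry k i j.

Definition bvec (k : nat) (w1 w2 : 'cV[int]_k) (c : int) : 'cV[int]_(2 * k + 1) :=
  \col_i (if (i < k)%N then ent w1 i
          else if (i < 2 * k)%N then ent w2 (i - k) else c).

Definition in_fiber (m n : nat) (A : 'M[int]_(m, n)) (b : 'cV[int]_m)
  (u : 'cV[int]_n) : Prop :=
  (forall i, 0 <= u i 0) /\ A *m u = b.

Definition conf_le (n : nat) (u v : 'cV[int]_n) : Prop :=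
  forall i, 0 <= u i 0 * v i 0 /\ `|u i 0| <= `|v i 0|.

Definition graver (m n : nat) (A : 'M[int]_(m, n)) (g : 'cV[int]_n) : Prop :=
  A *m g = 0 /\ g <> 0 /\
  (forall h : 'cV[int]_n, A *m h = 0 -> h <> 0 -> conf_le h g -> h = g).

Definition fiber_adj (n : nat) (M : 'cV[int]_n -> Prop) (u v : 'cV[int]_n) : Prop :=
  u <> v /\ (M (u - v) \/ M (- (u - v))).

Definition negnorm (k : nat) (w : 'cV[int]_k) : int :=
  \big[Num.max/0]_(i < k) Num.max (- w i 0) 0.

Definition lb (k : nat) (w1 w2 : 'cV[int]_k) (c : int) : int := negnorm w1.
Definition ub (k : nat) (w1 w2 : 'cV[int]_k) (c : int) : int := c - negnorm w2.

(* C_s(b): fiber elements whose (4k+1)-th coordinate (1-based) equals s *)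
Definition Cs (k : nat) (w1 w2 : 'cV[int]_k) (c s : int) (u : 'cV[int]_(4 * k + 2))
  : Prop :=
  in_fiber (A_k k) (bvec w1 w2 c) u /\ ent u (4 * k) = s.

Definition nbr_in (k : nat) (w1 w2 : 'cV[int]_k) (c t : int)
  (v u : 'cV[int]_(4 * k + 2)) : Prop :=
  fiber_adj (graver (A_k k)) u v /\ Cs w1 w2 c t u.

From HB Require Import structures.
From mathcomp Require Import all_boot all_order all_algebra zify.
Import Order.TTheory GRing.Theory Num.Theory.
Local Open Scope ring_scope.

(* Write u = (x, y, z, t, p, q) along the column blocks of A_k.  The fiber is
   cut out by x_i + y_i = w1_i + p, z_i + t_i = w2_i + q, p + q = c and u >= 0,
   which forces l(b) <= p <= u(b).  For bit vectors a, b the vector g(a, b) with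
   blocks (a, ~a, -b, -~b, 1, -1) lies in ker A_k, and a kernel element
   conformally below it is a multiple of it by its p-entry, which is 0 or 1; so
   every g(a, b) is a Graver move.  If p > l(b), take a_i = [x_i > 0]: then
   v - g(a, b) stays nonnegative for all 2^k choices of b, since x_i = 0 gives
   y_i = w1_i + p > 0.  Symmetrically, if p < u(b), v + g(a, b) with
   b_i = [z_i > 0] is nonnegative for all a. *)

Lemma ent_ord {n} (u : 'cV[int]_n) (i : 'I_n) : ent u i = u i 0.
Proof. by rewrite /ent valK. Qed.

Lemma ent_out {n} (u : 'cV[int]_n) j : (n <= j)%N -> ent u j = 0.
Proof. by move=> h; rewrite /ent insubF // ltnNge h. Qed.

Lemma ent_col {n} (F : nat -> int) j :
  ent (\col_(i < n) F i) j = if (j < n)%N then F j else 0.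
Proof. by rewrite /ent; case: insubP => [i -> <-|/negbTE ->]; rewrite ?mxE. Qed.

Lemma ent0 {n} j : ent (0 : 'cV[int]_n) j = 0.
Proof. by rewrite /ent; case: insubP => [i _ _|_]; rewrite ?mxE. Qed.

Lemma entD {n} (u v : 'cV[int]_n) j : ent (u + v) j = ent u j + ent v j.
Proof. by rewrite /ent; case: insubP => [i _ _|_]; rewrite ?mxE ?addr0. Qed.

Lemma entN {n} (u : 'cV[int]_n) j : ent (- u) j = - ent u j.
Proof. by rewrite /ent; case: insubP => [i _ _|_]; rewrite ?mxE ?oppr0. Qed.

Lemma entP {n} (u v : 'cV[int]_n) : (forall j, ent u j = ent v j) -> u = v.
Proof. by move=> h; apply/matrixP => i j; rewrite (ord1 j) -!ent_ord. Qed.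

Lemma ent_ge0P {n} (u : 'cV[int]_n) :
  (forall j, 0 <= ent u j) <-> (forall i, 0 <= u i 0).
Proof.
split=> h i; first by rewrite -ent_ord.
by rewrite /ent; case: insubP.
Qed.

Lemma sum_delta_ent {n} (u : 'cV[int]_n) a :
  \sum_(j < n) (val j == a)%:R * u j 0 = ent u a.
Proof.
rewrite /ent; case: insubP => [i _ <- | na].
  rewrite (bigD1 i) //= eqxx mul1r big1 ?addr0 // => j ji.
  by rewrite (inj_eq val_inj) (negbTE ji) mul0r.
rewrite big1 // => j _.
by case: eqP => [ja|]; [move: na; rewrite -ja ltn_ord | rewrite mul0r].
Qed.

Lemma conf_le_ent {n} {h g : 'cV[int]_n} : conf_le h g -> forall j,
  0 <= ent h j * ent g j /\ `|ent h j| <= `|ent g j|.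
Proof.
move=> hg j; case: (ltnP j n) => [jn|nj]; last by rewrite !ent_out.
by rewrite -[j]/(val (Ordinal jn)) !ent_ord.
Qed.

Lemma negnorm_ge0 {k} (w : 'cV[int]_k) : 0 <= negnorm w.
Proof.
apply: (big_ind (fun x : int => 0 <= x)) => // [x y|i _]; rewrite le_max.
  by move=> -> .
by rewrite lexx orbT.
Qed.

Lemma negnorm_ge {k} (w : 'cV[int]_k) i : (i < k)%N -> - ent w i <= negnorm w.
Proof.
move=> ik; rewrite /negnorm (bigD1 (Ordinal ik)) //=.
by rewrite -(ent_ord w (Ordinal ik)) /= !le_max lexx.
Qed.

Lemma negnorm_le {k} (w : 'cV[int]_k) x : 0 <= x ->
  (forall i, (i < k)%N -> - ent w i <= x) -> negnorm w <= x.
Proof.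
move=> x0 h; apply: (big_ind (fun y : int => y <= x)) => // [y z|i _].
  by rewrite ge_max => -> .
by rewrite ge_max x0 andbT -ent_ord h.
Qed.

Lemma exists_of_seq {T : eqType} {P : T -> Prop} {us : seq T} :
  (0 < size us)%N -> (forall u, u \in us -> P u) -> exists u, P u.
Proof. by case: us => // u us _ hP; exists u; apply: hP; rewrite mem_head. Qed.

Section GraverNeighbours.
Context {m n : nat} (A : 'M[int]_(m, n)).

Lemma graverN g : graver A g -> graver A (- g).
Proof.
move=> [Ag [g0 gmin]]; split; first by rewrite mulmxN Ag oppr0.
split; first by move/eqP; rewrite oppr_eq0 => /eqP.
move=> h Ah h0 hg; apply: oppr_inj; rewrite opprK.
apply: gmin; [by rewrite mulmxN Ah oppr0 | by move/eqP; rewrite oppr_eq0 => /eqP|].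
by move=> i; have [] := hg i; rewrite !mxE mulrN mulNr !normrN.
Qed.

Lemma in_fiberD b v g : in_fiber A b v -> A *m g = 0 ->
  (forall j, 0 <= ent (v + g) j) -> in_fiber A b (v + g).
Proof. by move=> [_ Av] Ag /ent_ge0P vg0; split; rewrite // mulmxDr Av Ag addr0. Qed.

Lemma fiber_adj_addr v g : graver A g -> fiber_adj (graver A) (v + g) v.
Proof.
move=> Gg; split; last by left; rewrite addrC addKr.
by move/eqP; rewrite -subr_eq0 (addrC v) addrK => /eqP; case: Gg => _ [].
Qed.

Lemma graver_nbr_seq {F : finType} (P : 'cV[int]_n -> Prop) v {g : F -> 'cV[int]_n} :
  injective g -> (forall f, graver A (g f)) -> (forall f, P (v + g f)) ->
  exists us : seq 'cV[int]_n, uniq us /\ size us = #|F| /\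
    (forall u, u \in us -> fiber_adj (graver A) u v /\ P u).
Proof.
move=> g_inj Gg Pg; exists [seq v + g f | f <- enum F]; split; [|split].
- by rewrite map_inj_uniq ?enum_uniq // => f1 f2 /addrI /g_inj.
- by rewrite size_map cardE.
- by move=> _ /mapP [f _ ->]; split; [apply: fiber_adj_addr|].
Qed.

End GraverNeighbours.

Section Ak.
Variable k : nat.
Implicit Types (u : 'cV[int]_(4 * k + 2)) (c : int).

Lemma coord_ind (P : nat -> Prop) :
  (forall i, (i < k)%N -> [/\ P i, P (k + i)%N, P (2 * k + i)%N & P (3 * k + i)%N]) ->
  P (4 * k)%N -> P (4 * k + 1)%N -> (forall n, (4 * k + 2 <= n)%N -> P n) ->
  forall n, P n.
Proof.
move=> Pblk P4k P4k1 Pout n.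
have [/Pblk []//|kn] := ltnP n k.
have [nk2|kn2] := ltnP n (2 * k).
  by rewrite -(subnKC kn); have [] := Pblk (n - k)%N ltac:(lia).
have [nk3|kn3] := ltnP n (3 * k).
  by rewrite -(subnKC kn2); have [] := Pblk (n - 2 * k)%N ltac:(lia).
have [nk4|kn4] := ltnP n (4 * k).
  by rewrite -(subnKC kn3); have [] := Pblk (n - 3 * k)%N ltac:(lia).
have [nk5|kn5] := ltnP n (4 * k + 1); first by have -> : n = (4 * k)%N by lia.
have [nk6|kn6] := ltnP n (4 * k + 2); first by have -> : n = (4 * k + 1)%N by lia.
exact: Pout.
Qed.

Definition w1_of u : 'cV[int]_k :=
  \col_(i < k) (ent u i + ent u (k + i) - ent u (4 * k)).
Definition w2_of u : 'cV[int]_k :=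
  \col_(i < k) (ent u (2 * k + i) + ent u (3 * k + i) - ent u (4 * k + 1)).
Definition c_of u : int := ent u (4 * k) + ent u (4 * k + 1).

Lemma ent_w1_of u i : (i < k)%N ->
  ent (w1_of u) i = ent u i + ent u (k + i) - ent u (4 * k).
Proof. by rewrite /ent; case: insubP => [j _ <- _|/negP]; rewrite ?mxE. Qed.

Lemma ent_w2_of u i : (i < k)%N ->
  ent (w2_of u) i = ent u (2 * k + i) + ent u (3 * k + i) - ent u (4 * k + 1).
Proof. by rewrite /ent; case: insubP => [j _ <- _|/negP]; rewrite ?mxE. Qed.

Lemma mul_A_k u : A_k k *m u = bvec (w1_of u) (w2_of u) (c_of u).
Proof.
apply/matrixP => n j; rewrite (ord1 j) !mxE.
under eq_bigr do rewrite mxE.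
have delta a := sum_delta_ent u a.
case: ifP => [nk | /negbT kn].
  rewrite ent_w1_of // -!delta -big_split -sumrB /=; apply: eq_bigr => j' _.
  by rewrite -mulrDl -mulrBl /Aentry nk; case: eqP; case: eqP; case: eqP => /=; lia.
case: ifP => [nk2 | /negbT kn2].
  rewrite ent_w2_of; last by lia.
  rewrite -!delta -big_split -sumrB /=; apply: eq_bigr => j' _.
  rewrite -mulrDl -mulrBl /Aentry (negbTE kn) nk2.
  by case: eqP; case: eqP; case: eqP => /=; lia.
rewrite /c_of -!delta -big_split /=; apply: eq_bigr => j' _.
rewrite -mulrDl /Aentry (negbTE kn) (negbTE kn2).
by case: eqP; case: eqP => /=; lia.
Qed.

Lemma ent_bvec (w1 w2 : 'cV[int]_k) c n : ent (bvec w1 w2 c) n =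
  if (n < k)%N then ent w1 n else if (n < 2 * k)%N then ent w2 (n - k)
  else if n == (2 * k)%N then c else 0.
Proof.
rewrite {1}/ent; case: insubP => [i _ <-|/negP ni]; rewrite ?mxE.
  have := ltn_ord i; case: ifP => // ik; case: ifP => // ik2 i2k.
  by rewrite ifT // /=; lia.
by do 3?case: ifP => // ?; lia.
Qed.

Lemma bvec_inj (w1 w2 w1' w2' : 'cV[int]_k) c c' :
  bvec w1 w2 c = bvec w1' w2' c' -> [/\ w1 = w1', w2 = w2' & c = c'].
Proof.
move=> e; have E n := congr1 (fun b => ent b n) e; split.
- apply: entP => n; have [nk|kn] := ltnP n k; last by rewrite !ent_out.
  by have := E n; rewrite !ent_bvec nk.
- apply: entP => n; have [nk|kn] := ltnP n k; last by rewrite !ent_out.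
  have [kn1 kn2] : (k + n < k)%N = false /\ (k + n < 2 * k)%N by lia.
  by have := E (k + n)%N; rewrite !ent_bvec kn1 kn2 addKn.
- have [k1 k2] : (2 * k < k)%N = false /\ (2 * k < 2 * k)%N = false by lia.
  by have := E (2 * k)%N; rewrite !ent_bvec k1 k2 eqxx.
Qed.

Lemma bvec0 : bvec 0 0 0 = 0 :> 'cV[int]_(2 * k + 1).
Proof. by apply: entP => n; rewrite ent_bvec !ent0; do 3?case: ifP. Qed.

Lemma A_k_mulP {u} {w1 w2 : 'cV[int]_k} {c} : A_k k *m u = bvec w1 w2 c ->
  [/\ w1_of u = w1, w2_of u = w2 & c_of u = c].
Proof. by rewrite mul_A_k => /bvec_inj. Qed.

Definition gmove_entry (a b : nat -> bool) (n : nat) : int :=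
  if (n < k)%N then (a n)%:R
  else if (n < 2 * k)%N then (~~ a (n - k)%N)%:R
  else if (n < 3 * k)%N then - (b (n - 2 * k)%N)%:R
  else if (n < 4 * k)%N then - (~~ b (n - 3 * k)%N)%:R
  else if n == (4 * k)%N then 1 else -1.

Definition gmove a b : 'cV[int]_(4 * k + 2) := \col_(n < 4 * k + 2) gmove_entry a b n.

Section GMove.
Variables a b : nat -> bool.

Lemma ent_gmove n : ent (gmove a b) n = if (n < 4 * k + 2)%N then gmove_entry a b n else 0.
Proof. exact: ent_col. Qed.

Lemma ent_gmove_blk i : (i < k)%N ->
  [/\ ent (gmove a b) i = (a i)%:R, ent (gmove a b) (k + i) = (~~ a i)%:R,
      ent (gmove a b) (2 * k + i) = - (b i)%:R
    & ent (gmove a b) (3 * k + i) = - (~~ b i)%:R].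
Proof.
move=> ik; rewrite !ent_gmove /gmove_entry.
by split; do ?case: ifP => ?; rewrite ?addKn //; lia.
Qed.

Lemma ent_gmove_4k : ent (gmove a b) (4 * k) = 1.
Proof. by rewrite ent_gmove /gmove_entry; do ?case: ifP => ?; rewrite ?eqxx //; lia. Qed.

Lemma ent_gmove_4k1 : ent (gmove a b) (4 * k + 1) = -1.
Proof. by rewrite ent_gmove /gmove_entry; do ?case: ifP => ?; lia. Qed.

End GMove.

Lemma gmove_ker a b : A_k k *m gmove a b = 0.
Proof.
rewrite mul_A_k -bvec0; congr bvec; last by rewrite /c_of ent_gmove_4k ent_gmove_4k1.
- apply: entP => i; rewrite ent0; have [ik|] := ltnP i k; last exact: ent_out.
  by have [] := ent_gmove_blk a b _ ik; rewrite ent_w1_of // ent_gmove_4k => -> -> _ _; case: (a i).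
- apply: entP => i; rewrite ent0; have [ik|] := ltnP i k; last exact: ent_out.
  by have [] := ent_gmove_blk a b _ ik; rewrite ent_w2_of // ent_gmove_4k1 => _ _ -> ->; case: (b i).
Qed.

Lemma gmove_graver a b : graver (A_k k) (gmove a b).
Proof.
split; first exact: gmove_ker.
split; first by move=> m0; have := ent_gmove_4k a b; rewrite m0 ent0.
move=> h; rewrite mul_A_k -bvec0 => /bvec_inj [H1 H2 H3] h0 hg.
have C := conf_le_ent hg.
set t := ent h (4 * k).
have t01 : t = 0 \/ t = 1 by have [] := C (4 * k)%N; rewrite ent_gmove_4k; lia.
have h4k1 : ent h (4 * k + 1) = - t by move: H3; rewrite /c_of; lia.
(* Conformality pins one entry of each block pair to 0, the kernel equations
   determine the other. *)
have h_eq : forall n, ent h n = t * ent (gmove a b) n.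
  apply: coord_ind => [i ik||| n hn]; last 3 first.
  - by rewrite ent_gmove_4k mulr1.
  - by rewrite ent_gmove_4k1 h4k1 mulrN1.
  - by rewrite !ent_out ?mulr0.
  have [m1 m2 m3 m4] := ent_gmove_blk a b _ ik.
  have := congr1 (fun w => ent w i) H1; have := congr1 (fun w => ent w i) H2.
  rewrite ent_w1_of // ent_w2_of // ent0 h4k1 -/t => e2 e1.
  have := C i; have := C (k + i)%N; have := C (2 * k + i)%N; have := C (3 * k + i)%N.
  rewrite m1 m2 m3 m4; case: (a i); case: (b i) => /=; split; lia.
case: t01 => t0; last by apply: entP => n; rewrite h_eq t0 mul1r.
by case: h0; apply: entP => n; rewrite h_eq t0 mul0r ent0.
Qed.

Lemma gmove_injl b : injective (fun t : k.-tuple bool => gmove (nth false t) b).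
Proof.
move=> t1 t2 e; apply/val_inj/(@eq_from_nth _ false); first by rewrite !size_tuple.
move=> i; rewrite size_tuple => ik; have := congr1 (fun w => ent w i) e.
have [-> _ _ _] := ent_gmove_blk (nth false t1) b _ ik.
have [-> _ _ _] := ent_gmove_blk (nth false t2) b _ ik.
by case: (nth false t1 i); case: (nth false t2 i).
Qed.

Lemma gmove_injr a : injective (fun t : k.-tuple bool => gmove a (nth false t)).
Proof.
move=> t1 t2 e; apply/val_inj/(@eq_from_nth _ false); first by rewrite !size_tuple.
move=> i; rewrite size_tuple => ik; have := congr1 (fun w => ent w (2 * k + i)%N) e.
have [_ _ -> _] := ent_gmove_blk a (nth false t1) _ ik.
have [_ _ -> _] := ent_gmove_blk a (nth false t2) _ ik.
by case: (nth false t1 i); case: (nth false t2 i).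
Qed.

Section Layers.
Variables (w1 w2 : 'cV[int]_k) (c : int).

Lemma Cs_eqs {s u} : Cs w1 w2 c s u ->
  [/\ forall j, 0 <= ent u j,
      forall i, (i < k)%N -> ent u i + ent u (k + i) - s = ent w1 i,
      forall i, (i < k)%N -> ent u (2 * k + i) + ent u (3 * k + i) - ent u (4 * k + 1) = ent w2 i
    & s + ent u (4 * k + 1) = c].
Proof.
move=> [[u0 Au] us]; have [H1 H2 H3] := A_k_mulP Au; split.
- exact/ent_ge0P.
- by move=> i ik; rewrite -us -ent_w1_of // H1.
- by move=> i ik; rewrite -ent_w2_of // H2.
- by rewrite -us -H3.
Qed.

Lemma Cs_bounds s u : Cs w1 w2 c s u -> lb w1 w2 c <= s <= ub w1 w2 c.
Proof.
move=> hu; have [U E1 E2 E3] := Cs_eqs hu.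
have s0 : 0 <= s by rewrite -hu.2.
apply/andP; split.
  apply: negnorm_le => // i ik.
  by have := E1 i ik; have := U i; have := U (k + i)%N; lia.
suff : negnorm w2 <= ent u (4 * k + 1) by rewrite /ub -E3; lia.
apply: negnorm_le => // i ik.
by have := E2 i ik; have := U (2 * k + i)%N; have := U (3 * k + i)%N; lia.
Qed.

Lemma Cs_sub_gmove s v b : lb w1 w2 c < s -> Cs w1 w2 c s v ->
  Cs w1 w2 c (s - 1) (v - gmove (fun i => 0 < ent v i) b).
Proof.
move=> ls hv; have [V E1 _ _] := Cs_eqs hv.
split; last by rewrite entD entN ent_gmove_4k hv.2.
apply: in_fiberD; [exact: hv.1 | by rewrite mulmxN gmove_ker oppr0 |].
have lb0 := negnorm_ge0 w1; rewrite /lb in ls.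
apply: coord_ind => [i ik||| n hn]; rewrite ?entD ?entN; last 3 first.
- by rewrite ent_gmove_4k hv.2; lia.
- by rewrite ent_gmove_4k1; have := V (4 * k + 1)%N; lia.
- by rewrite !ent_out ?oppr0.
have [m1 m2 m3 m4] := ent_gmove_blk (fun i => 0 < ent v i) b _ ik.
rewrite m1 m2 m3 m4 /=.
have := E1 i ik; have := negnorm_ge w1 _ ik; have := V i; have := V (k + i)%N.
have := V (2 * k + i)%N; have := V (3 * k + i)%N.
by case: ltP; case: (b i) => /=; split; lia.
Qed.

Lemma Cs_add_gmove s v a : s < ub w1 w2 c -> Cs w1 w2 c s v ->
  Cs w1 w2 c (s + 1) (v + gmove a (fun i => 0 < ent v (2 * k + i)%N)).
Proof.
move=> su hv; have [V _ E2 E3] := Cs_eqs hv.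
split; last by rewrite entD ent_gmove_4k hv.2.
apply: in_fiberD; [exact: hv.1 | exact: gmove_ker |].
have ub0 := negnorm_ge0 w2; rewrite /ub in su.
apply: coord_ind => [i ik||| n hn]; rewrite ?entD; last 3 first.
- by rewrite ent_gmove_4k; have := V (4 * k)%N; lia.
- by rewrite ent_gmove_4k1; lia.
- by rewrite !ent_out ?addr0.
have [m1 m2 m3 m4] := ent_gmove_blk a (fun i => 0 < ent v (2 * k + i)%N) _ ik.
rewrite m1 m2 m3 m4 /=.
have := E2 i ik; have := negnorm_ge w2 _ ik; have := V i; have := V (k + i)%N.
have := V (2 * k + i)%N; have := V (3 * k + i)%N.
by case: ltP; case: (a i) => /=; split; lia.
Qed.

Lemma Cs_nbrs_down s v : lb w1 w2 c < s -> Cs w1 w2 c s v ->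
  exists us : seq 'cV[int]_(4 * k + 2), uniq us /\ size us = (2 ^ k)%N /\
    (forall u, u \in us -> nbr_in w1 w2 c (s - 1) v u).
Proof.
move=> ls hv; pose g (t : k.-tuple bool) := - gmove (fun i => 0 < ent v i) (nth false t).
have g_inj : injective g by move=> t1 t2 /oppr_inj /gmove_injr.
have [||us [uq [sz nbr]]] := graver_nbr_seq (A_k k) (Cs w1 w2 c (s - 1)) v g_inj.
- by move=> t; apply/graverN/gmove_graver.
- by move=> t; apply: Cs_sub_gmove.
by exists us; rewrite sz card_tuple card_bool.
Qed.

Lemma Cs_nbrs_up s v : s < ub w1 w2 c -> Cs w1 w2 c s v ->
  exists us : seq 'cV[int]_(4 * k + 2), uniq us /\ size us = (2 ^ k)%N /\
    (forall u, u \in us -> nbr_in w1 w2 c (s + 1) v u).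
Proof.
move=> su hv; have [||us [uq [sz nbr]]] := graver_nbr_seq (A_k k) (Cs w1 w2 c (s + 1)) v (gmove_injl (fun i => 0 < ent v (2 * k + i)%N)).
- by move=> t; apply: gmove_graver.
- by move=> t; apply: Cs_add_gmove.
by exists us; rewrite sz card_tuple card_bool.
Qed.

End Layers.

End Ak.

Theorem proposition2 (k : nat) (hk : (1 <= k)%N) (w1 w2 : 'cV[int]_k) (c : int)
  (hF : exists u, in_fiber (A_k k) (bvec w1 w2 c) u)
  (s : int) (hs : lb w1 w2 c <= s <= ub w1 w2 c)
  (v : 'cV[int]_(4 * k + 2)) (hv : Cs w1 w2 c s v) :
  ((exists u, nbr_in w1 w2 c (s - 1) v u) <-> lb w1 w2 c < s) /\
  (lb w1 w2 c < s ->
     exists us : seq 'cV[int]_(4 * k + 2),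
       uniq us /\ size us = (2 ^ k)%N /\ (forall u, u \in us -> nbr_in w1 w2 c (s - 1) v u)) /\
  ((exists u, nbr_in w1 w2 c (s + 1) v u) <-> s < ub w1 w2 c) /\
  (s < ub w1 w2 c ->
     exists us : seq 'cV[int]_(4 * k + 2),
       uniq us /\ size us = (2 ^ k)%N /\ (forall u, u \in us -> nbr_in w1 w2 c (s + 1) v u)).
Proof.
have ex_nbr t : (exists us : seq 'cV[int]_(4 * k + 2), uniq us /\ size us = (2 ^ k)%N /\
    (forall u, u \in us -> nbr_in w1 w2 c t v u)) -> exists u, nbr_in w1 w2 c t v u.
  by move=> [us [_ [sz nbr]]]; apply: (exists_of_seq _ nbr); rewrite sz expn_gt0.
have down h := @Cs_nbrs_down k w1 w2 c s v h hv.
have up h := @Cs_nbrs_up k w1 w2 c s v h hv.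
split; [split|split; [exact: down|split; [split|exact: up]]].
- by move=> [u [_ /Cs_bounds /andP [lu _]]]; lia.
- by move/down/ex_nbr.
- by move=> [u [_ /Cs_bounds /andP [_ uu]]]; lia.
- by move/up/ex_nbr.
Qed.
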